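(* Let $S$ be a finite set, $T\ge1$, and let $p$ be the law of a Markov chain $(Y_1,\dots,Y_T)$ of order $m$ on $S^T$, where $1\le m\le T$. For integers $1\le a\le b\le T$ write $p(s_a^b):=\mathbf P(Y_a^b=s_a^b)$, and for every positive integer $k$ define $$\bar R_k(s^T):=-\frac1T\ln\prod_{j=1-k}^{T-1}p\big(s_{(j+1)\vee1}^{(j+k)\wedge T}\big),\qquad \bar R_\infty(s^T):=-\frac1T\ln p(s^T).$$ Then for every $s^T\in S^T$ and every integer $k\ge m$, $$\bar R_k(s^T)=\bar R_m(s^T)+(k-m)\bar R_\infty(s^T).$$
   Context: $s_a^b=(s_a,\dots,s_b)$; $\vee=\max$, $\wedge=\min$; $\ln0=-\infty$. A Markov chain of order $m$ is one in which the conditional law of $Y_t$ given $Y_1^{t-1}$ depends only on $Y_{t-m}^{t-1}$ (for $t>m$). *)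

From HB Require Import structures.
From mathcomp Require Import all_boot all_order all_algebra.
From mathcomp Require Import reals constructive_ereal exp.
Set Implicit Arguments. Unset Strict Implicit. Unset Printing Implicit Defensive.
Import Order.TTheory GRing.Theory Num.Theory.
Local Open Scope ring_scope.

(* A word s^T = (s_1,...,s_T) is a finite function 'I_T -> S;
   the paper's position i (1-based) is the ordinal i-1. *)
Definition word (S : finType) (T : nat) := {ffun 'I_T -> S}.

Definition is_law (R : realType) (S : finType) (T : nat) (p : word S T -> R) :=
  (forall t, 0 <= p t) /\ \sum_(t : word S T) p t = 1.

(* p(s_a^b) = P(Y_a^b = s_a^b), positions 1-based *)
Definition marg (R : realType) (S : finType) (T : nat) (p : word S T -> R)
    (a b : nat) (s : word S T) : R :=
  \sum_(t : word S T | [forall i : 'I_T, ((a <= i.+1 <= b)%N) ==> (t i == s i)]) p t.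

(* Markov chain of order m: for m < t <= T, the conditional law of Y_t given
   Y_1^{t-1} = s_1^{t-1} (defined when P(Y_1^{t-1}=s_1^{t-1}) > 0) depends only
   on s_{t-m}^{t-1} (and of course the value s_t). *)
Definition markov_order (R : realType) (S : finType) (T : nat) (m : nat)
    (p : word S T -> R) :=
  forall t : nat, (m < t <= T)%N ->
  forall s s' : word S T,
    (forall i : 'I_T, (t - m <= i.+1 <= t)%N -> s i = s' i) ->
    0 < marg p 1 (t - 1) s -> 0 < marg p 1 (t - 1) s' ->
    marg p 1 t s / marg p 1 (t - 1) s = marg p 1 t s' / marg p 1 (t - 1) s'.

Definition eln (R : realType) (x : R) : \bar R :=
  if x == 0 then -oo%E else (ln x)%:E.

(* \bar R_k(s^T) = -(1/T) ln prod_{j=1-k}^{T-1} p(s_{(j+1) v 1}^{(j+k) ^ T}).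
   Reindexed by j' = j + k - 1 in [0, T+k-2]:
   (j+1) v 1 = maxn (j'+2-k) 1 (truncated nat subtraction), (j+k) ^ T = minn (j'+1) T. *)
Definition Rbar (R : realType) (S : finType) (T : nat) (p : word S T -> R)
    (k : nat) (s : word S T) : \bar R :=
  (- ((T%:R)^-1)%:E * eln (\prod_(j < T + k - 1)
        marg p (maxn (j.+2 - k) 1) (minn j.+1 T) s))%E.

Definition Rbar_inf (R : realType) (S : finType) (T : nat) (p : word S T -> R)
    (s : word S T) : \bar R :=
  (- ((T%:R)^-1)%:E * eln (p s))%E.

(* For a <= t - m the Markov property, averaged over the letters before a,
   gives p(s_a^t) p(s_1^(t-1)) = p(s_1^t) p(s_a^(t-1)).  So for k >= m the
   windows of length k+1 ending at t <= T can be traded one by one for the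
   windows of length k ending at t-1, the prefix probabilities telescoping to
   p(s^T), while the windows ending at T merely shift: the window product of
   length k+1 is p(s^T) times that of length k.  Cross-multiplied identities make
   zero probabilities harmless. *)
From HB Require Import structures.
From mathcomp Require Import all_boot all_order all_algebra.
From mathcomp Require Import reals constructive_ereal exp.
From mathcomp Require Import zify ring.
Set Implicit Arguments. Unset Strict Implicit. Unset Printing Implicit Defensive.
Import Order.TTheory GRing.Theory Num.Theory.
Local Open Scope ring_scope.

Section Marginals.
Variables (R : realType) (S : finType) (T : nat) (p : word S T -> R).

Lemma marg_full (s : word S T) : marg p 1 T s = p s.
Proof.
rewrite /marg (big_pred1 s) // => t /=; apply/forallP/eqP => [H | ->].
  by apply/ffunP => i; apply/eqP; move: (H i); rewrite ltn_ord.
by move=> i; rewrite eqxx implybT.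
Qed.

Lemma marg_sum_prefix a b (s : word S T) : (a <= b.+1)%N ->
  marg p a b s =
  \sum_(w : word S T | [forall i : 'I_T, (a <= i.+1)%N ==> (w i == s i)])
     marg p 1 b w.
Proof.
move=> ab; rewrite /marg.
pose glue (v : word S T) : word S T :=
  [ffun i : 'I_T => if (i.+1 <= b)%N then v i else s i].
rewrite (partition_big glue
  (fun w : word S T => [forall i : 'I_T, (a <= i.+1)%N ==> (w i == s i)])) /=;
  last first.
  move=> v /forallP Hv; apply/forallP => i; rewrite ffunE; apply/implyP => ai.
  by case: ifP => ib //; move: (Hv i); rewrite ai ib.
apply: eq_bigr => w /forallP Hw; apply: eq_bigl => v.
apply/idP/idP => [/andP[/forallP _ /eqP <-] | /forallP H].
  by apply/forallP => i; rewrite ffunE; case: (i < b)%N => /=.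
apply/andP; split.
  apply/forallP => i; apply/implyP => /andP[ai ib].
  by move: (H i) (Hw i); rewrite ib ai /= => /eqP ->.
apply/eqP/ffunP => i; rewrite ffunE; case: ifP => ib.
  by move: (H i); rewrite ib /= => /eqP.
by move: (Hw i); rewrite (_ : (a <= i.+1)%N) ?(negbT ib) //=; [move/eqP | lia].
Qed.

Hypothesis p_ge0 : forall t, 0 <= p t.

Lemma marg_ge0 a b s : 0 <= marg p a b s.
Proof. exact: sumr_ge0. Qed.

Lemma marg_extend_le a b b' s : (b <= b')%N -> marg p a b' s <= marg p a b s.
Proof.
move=> bb; rewrite /marg [X in X <= _]big_mkcond [X in _ <= X]big_mkcond /=.
apply: ler_sum => t _; case: ifP => H1; case: ifP => H2 //.
exfalso; move/negP: H2; apply; apply/forallP => i; move/forallP: H1 => /(_ i).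
by move=> Hi; apply/implyP => /andP[h1 h2]; apply: (implyP Hi); rewrite h1 /=; lia.
Qed.

Lemma marg_extend_eq0 a b b' s :
  (b <= b')%N -> marg p a b s = 0 -> marg p a b' s = 0.
Proof.
move=> bb H; apply/le_anti; rewrite marg_ge0 andbT -H.
exact: marg_extend_le.
Qed.

End Marginals.

Section MarkovChain.
Variables (R : realType) (S : finType) (T m : nat) (p : word S T -> R).
Hypotheses (p_ge0 : forall t, 0 <= p t) (markov : markov_order m p).

Lemma markov_cross t (u s : word S T) : (m < t <= T)%N ->
  (forall i : 'I_T, (t - m <= i.+1 <= t)%N -> u i = s i) ->
  marg p 1 (t - 1) s * marg p 1 t u = marg p 1 t s * marg p 1 (t - 1) u.
Proof.
move=> tm us.
have [s0|s_gt0] := eqVneq (marg p 1 (t - 1) s) 0.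
  by rewrite s0 (marg_extend_eq0 p_ge0 (leq_subr 1 t) s0) !mul0r.
have [u0|u_gt0] := eqVneq (marg p 1 (t - 1) u) 0.
  by rewrite u0 (marg_extend_eq0 p_ge0 (leq_subr 1 t) u0) !mulr0.
rewrite -[marg p 1 t u](divfK u_gt0) (markov tm us) ?lt0r ?marg_ge0 ?andbT //.
by field.
Qed.

Lemma marg_window_cross a t (s : word S T) : (a <= t - m)%N -> (m < t <= T)%N ->
  marg p 1 (t - 1) s * marg p a t s = marg p 1 t s * marg p a (t - 1) s.
Proof.
move=> atm tm; rewrite !(@marg_sum_prefix _ _ _ _ a) ?mulr_sumr; try lia.
apply: eq_bigr => w /forallP sw.
rewrite mulrC [RHS]mulrC -markov_cross // => i /andP[h1 h2].
by apply/esym/eqP; apply: (implyP (sw i)); lia.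
Qed.

Lemma prod_windows_head k n (s : word S T) : (m <= k)%N -> (n < T)%N ->
  \prod_(0 <= j < n.+1) marg p (maxn (j.+1 - k) 1) j.+1 s =
  marg p 1 n.+1 s * \prod_(0 <= j < n) marg p (maxn (j.+2 - k) 1) j.+1 s.
Proof.
move=> mk; elim: n => [|n IH] nT.
  by rewrite big_nat1 big_geq // mulr1 (_ : maxn _ 1 = 1%N) //; lia.
rewrite big_nat_recr //= IH ?big_nat_recr //=; last lia.
set a := maxn (n.+2 - k) 1; set P := \prod_(0 <= j < n) _.
have cross : marg p 1 n.+1 s * marg p a n.+2 s =
             marg p 1 n.+2 s * marg p a n.+1 s.
  have [a1|a_gt1] := leqP a 1.
    by rewrite (_ : a = 1%N) 1?mulrC //; lia.
  by have := @marg_window_cross a n.+2 s; rewrite subn1 /=; apply; lia.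
transitivity (P * (marg p 1 n.+1 s * marg p a n.+2 s)); first ring.
by rewrite cross; ring.
Qed.

Definition window_prod (k : nat) (s : word S T) : R :=
  \prod_(j < T + k - 1) marg p (maxn (j.+2 - k) 1) (minn j.+1 T) s.

Lemma window_prodE k (s : word S T) : window_prod k s =
  \prod_(0 <= j < T + k - 1) marg p (maxn (j.+2 - k) 1) (minn j.+1 T) s.
Proof. by rewrite big_mkord. Qed.

Lemma window_prodS k (s : word S T) : (m <= k)%N -> (1 <= T)%N ->
  window_prod k.+1 s = p s * window_prod k s.
Proof.
move=> mk T1; rewrite !window_prodE.
rewrite (big_cat_nat (leq0n T)) /=; last lia.
rewrite [in RHS](big_cat_nat (leq0n T.-1)) /=; last lia.
have TE : T.-1.+1 = T by lia.
have head : \prod_(0 <= j < T) marg p (maxn (j.+2 - k.+1) 1) (minn j.+1 T) s =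
    p s * \prod_(0 <= j < T.-1) marg p (maxn (j.+2 - k) 1) (minn j.+1 T) s.
  rewrite -{1}TE (eq_big_nat _ _ (F2 := fun j => marg p (maxn (j.+1 - k) 1) j.+1 s));
    last by move=> j /andP[_ jT]; congr (marg _ _ _ _); lia.
  rewrite prod_windows_head ?TE ?marg_full //.
  by congr (_ * _); apply: eq_big_nat => j /andP[_ jT]; congr (marg _ _ _ _); lia.
rewrite head -mulrA; congr (_ * (_ * _)).
rewrite -{1}TE big_add1 (_ : (T + k.+1 - 1).-1 = T + k - 1)%N; last lia.
by apply: eq_big_nat => j /andP[jT _]; congr (marg _ _ _ _); lia.
Qed.

Lemma window_prod_addn d (s : word S T) : (1 <= T)%N ->
  window_prod (m + d) s = window_prod m s * p s ^+ d.
Proof.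
move=> T1; elim: d => [|d IH]; first by rewrite addn0 mulr1.
by rewrite addnS window_prodS ?leq_addr // IH exprS; ring.
Qed.

End MarkovChain.

Section ExtendedLog.
Variable R : realType.

Lemma eln_lt_pinfty (x : R) : (eln x < +oo)%E.
Proof. by rewrite /eln; case: ifP; rewrite ?ltry. Qed.

Lemma elnM (x y : R) : 0 <= x -> 0 <= y -> eln (x * y) = (eln x + eln y)%E.
Proof.
rewrite !le0r => /predU1P[-> _|x_gt0]; first by rewrite mul0r /eln eqxx.
case/predU1P => [->|y_gt0]; first by rewrite mulr0 /eln eqxx addeNy.
by rewrite /eln !gt_eqF ?mulr_gt0 // lnM.
Qed.

Lemma elnX (x : R) n : 0 <= x -> eln (x ^+ n) = (n%:R%:E * eln x)%E.
Proof.
move=> x_ge0; rewrite mule_natl; elim: n => [|n IH].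
  by rewrite /eln oner_eq0 ln1.
by rewrite exprS elnM ?exprn_ge0 // IH muleS.
Qed.

End ExtendedLog.

Theorem proposition7 (R : realType) (S : finType) (T m : nat)
    (p : word S T -> R) :
  (1 <= T)%N -> (1 <= m <= T)%N ->
  is_law p -> markov_order m p ->
  forall (s : word S T) (k : nat), (m <= k)%N ->
    Rbar p k s = (Rbar p m s + ((k - m)%:R)%:E * Rbar_inf p s)%E.
Proof.
move=> T1 _ [p_ge0 _] markov s k mk.
have [d ->] : exists d, k = (m + d)%N by exists (k - m)%N; lia.
rewrite addKn /Rbar /Rbar_inf -!/(window_prod p _ _).
have W_ge0 : 0 <= window_prod p m s by apply: prodr_ge0 => j _; exact: marg_ge0.
rewrite window_prod_addn // elnM ?exprn_ge0 //.
rewrite muleDr ?ltpinfty_adde_def ?inE ?eln_lt_pinfty //.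
by rewrite elnX // muleCA.
Qed.
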